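(* Let $D$ be a strongly oriented graph, with $n(D)$ vertices and $m(D)$ arcs. Then $\overrightarrow{hn}_{g}(D)\leq m(D)-n(D)+2$.
   Context: An oriented graph is a digraph obtained from a finite simple graph by orienting each edge in exactly one direction (so there are no loops and never both arcs $(u,v)$ and $(v,u)$). It is strongly oriented if for every ordered pair $u,v$ of distinct vertices there is a directed path from $u$ to $v$. The geodetic interval function $I_g$ on an oriented graph $D$ assigns to a pair $(u,v)$ the set of vertices lying on some shortest directed $(u,v)$-path or on some shortest directed $(v,u)$-path (this set contains $u$ and $v$). For $S\subseteq V(D)$, $I_g(S)=\bigcup_{u,v\in S}I_g(u,v)$; a set $C$ is convex if $I_g(C)=C$; the convex hull of $S$ is the smallest convex set containing $S$ (equivalently, the union of the iterates $I_g^k(S)$). A hull set is a set whose convex hull is $V(D)$, and $\overrightarrow{hn}_{g}(D)$ (the geodetic hull number) is the minimum size of a hull set of $D$. *)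

From mathcomp Require Import all_boot.
From mathcomp Require Import boolp.
Set Implicit Arguments. Unset Strict Implicit. Unset Printing Implicit Defensive.

Section Digraph.
Variables (T : finType) (a : rel T).

Definition oriented : Prop :=
  (forall x, ~~ a x x) /\ (forall x y, a x y -> ~~ a y x).

(* a directed (u,v)-walk with arc sequence of length size p *)
Definition dwalk (u v : T) (p : seq T) : bool := path a u p && (last u p == v).

Definition strongly_connected : Prop :=
  forall u v : T, u != v -> exists p, dwalk u v p.

Definition strongly_oriented : Prop := oriented /\ strongly_connected.

Definition shortest_dpath (u v : T) (p : seq T) : Prop :=
  dwalk u v p /\ forall q, dwalk u v q -> size p <= size q.

Definition Ig (u v : T) : {set T} :=
  [set x | `[< exists p, shortest_dpath u v p /\ x \in u :: p >]
        || `[< exists p, shortest_dpath v u p /\ x \in v :: p >] ].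

Definition IgS (S : {set T}) : {set T} := \bigcup_(u in S) \bigcup_(v in S) Ig u v.

Definition convex (C : {set T}) : bool := IgS C == C.

Definition convex_hull (S : {set T}) : {set T} :=
  \bigcap_(C : {set T} | convex C && (S \subset C)) C.

Definition hull_set (S : {set T}) : bool := convex_hull S == [set: T].

Definition hull_number : nat :=
  \big[minn/#|T|]_(S : {set T} | hull_set S) #|S|.

Definition num_vertices : nat := #|T|.
Definition num_arcs : nat := #|[set e : T * T | a e.1 e.2]|.

End Digraph.

From mathcomp Require Import all_boot.
From mathcomp Require Import boolp zify.
Set Implicit Arguments. Unset Strict Implicit. Unset Printing Implicit Defensive.

(* In a strongly connected
   digraph every vertex of a convex set C with |C| >= 2 has an out-neighbour in
   C, namely the second vertex of a shortest path to another vertex of C; so the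
   hull H of two distinct vertices spans at least |H| arcs.  Now enlarge S one
   vertex at a time, adding the head w of an arc xw leaving the current hull H.
   The new hull H' spans the arcs inside H, one arc out of each vertex of
   H' minus H, and xw, so |S| + |H| <= #(arcs inside H) + 2 is preserved until
   H is the whole vertex set. *)

Lemma geq_bigmin_cond (I : finType) (P : pred I) (F : I -> nat) d i0 :
  P i0 -> \big[minn/d]_(i | P i) F i <= F i0.
Proof.
rewrite unlock; elim: (index_enum I) (mem_index_enum i0) => //= i r IHr.
rewrite inE => /orP[/eqP <- -> | /IHr {}IHr /IHr]; first exact: geq_minl.
by case: (P i) => //; apply: leq_trans (geq_minr _ _).
Qed.

Section ConvexHull.
Variables (T : finType) (a : rel T).

Local Notation hull := (convex_hull a).

Definition arcs (A B : {set T}) : {set T * T} :=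
  [set e | [&& a e.1 e.2, e.1 \in A & e.2 \in B]].

Lemma num_arcsE : num_arcs a = #|arcs [set: T] [set: T]|.
Proof. by apply: eq_card => e; rewrite !inE !andbT. Qed.

Lemma hull_number_le (S : {set T}) : hull_set a S -> hull_number a <= #|S|.
Proof. exact: geq_bigmin_cond. Qed.

Lemma exists_shortest_dpath u v p :
  dwalk a u v p -> exists q, shortest_dpath a u v q.
Proof.
move=> uvp; have ex_len : exists n, `[< exists q, size q = n /\ dwalk a u v q >].
  by exists (size p); apply/asboolP; exists p.
case: (ex_minnP ex_len) => n /asboolP[q [<- uvq]] min_q.
by exists q; split=> // r uvr; apply: min_q; apply/asboolP; exists r.
Qed.

Lemma subset_convex_hull (S : {set T}) : S \subset hull S.
Proof. by apply/bigcapsP => C /andP[]. Qed.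

Lemma convex_hullS (S1 S2 : {set T}) : S1 \subset S2 -> hull S1 \subset hull S2.
Proof.
move=> sS12; apply/bigcapsP => C /andP[convC sS2C].
by apply: bigcap_inf; rewrite convC (subset_trans sS12).
Qed.

Lemma convex_hull_shortest_dpath (S : {set T}) u v p :
  u \in hull S -> v \in hull S -> shortest_dpath a u v p ->
  {subset u :: p <= hull S}.
Proof.
move=> /bigcapP uS /bigcapP vS uvp x xp; apply/bigcapP => C PC.
have [/eqP <- _] := andP PC.
apply/bigcupP; exists u; first exact: uS.
apply/bigcupP; exists v; first exact: vS.
by rewrite inE; apply/orP; left; apply/asboolP; exists p.
Qed.

Lemma dwalk_exit_arc (A : {set T}) u v p :
  u \in A -> v \notin A -> dwalk a u v p ->
  exists x w, [/\ x \in A, w \notin A & a x w].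
Proof.
elim: p u => [|y p IHp] u uA vA /andP[/= uvp /eqP lastv].
  by rewrite -lastv uA in vA.
have [uy yp] := andP uvp.
case yA: (y \in A); last by exists u, y; rewrite yA.
by apply: IHp yA vA _; rewrite /dwalk yp lastv eqxx.
Qed.

Lemma leq_card_arcs (D B : {set T}) :
  {in D, forall v, exists2 y, y \in B & a v y} -> #|D| <= #|arcs D B|.
Proof.
move=> out_D; pose succ v := odflt v [pick y in B | a v y].
rewrite -(card_in_imset (f := fun v => (v, succ v))) => [|v1 v2 _ _ [] //].
apply/subset_leq_card/subsetP => _ /imsetP[v vD ->].
have [y yB vy] := out_D v vD.
rewrite inE /= vD /succ; case: pickP => [z /andP[-> ->] // | /(_ y)].
by rewrite yB vy.
Qed.

Lemma card_arcs_grow (H1 H2 : {set T}) x w :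
  H1 \subset H2 -> x \in H1 -> w \in H2 -> w \notin H1 -> a x w ->
  {in H2 :\: H1, forall v, exists2 y, y \in H2 & a v y} ->
  #|arcs H1 H1| + #|H2 :\: H1| < #|arcs H2 H2|.
Proof.
move=> sH12 xH1 wH2 wH1 xw out_new.
have disj : arcs H1 H1 :&: arcs (H2 :\: H1) H2 = set0.
  by apply/setP => e; rewrite !inE; case: (e.1 \in H1); rewrite ?andbF.
apply: leq_ltn_trans (leq_add (leqnn _) (leq_card_arcs out_new)) _.
rewrite -[_ + _]subn0 -(cards0 (T * T)%type) -disj -cardsU; apply: proper_card.
apply/properP; split.
  apply/subsetP => e; rewrite !inE.
  case/orP=> [/and3P[-> e1 e2] | /and3P[-> /andP[_ ->] ->]] //.
  by rewrite !(subsetP sH12).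
exists (x, w); rewrite !inE /= xw (subsetP sH12 x xH1) wH2 //=.
by rewrite xH1 (negbTE wH1).
Qed.

Lemma hull_setT : hull_set a [set: T].
Proof. by rewrite /hull_set eqEsubset subsetT subset_convex_hull. Qed.

Definition hull_arc_bound (S : {set T}) : bool :=
  #|S| + #|hull S| <= #|arcs (hull S) (hull S)| + 2.

Section StronglyConnected.
Hypothesis sc : strongly_connected a.

Lemma convex_hull_out_arc (S : {set T}) v :
  1 < #|hull S| -> v \in hull S -> exists2 y, y \in hull S & a v y.
Proof.
move=> /card_gt1P[x1 [x2 [x1S x2S x12]]] vS.
have [w wS vw] : exists2 w, w \in hull S & v != w.
  by case: (eqVneq v x1) => [-> | ]; [exists x2 | exists x1].
have [p /exists_shortest_dpath[[|y q] vwq]] := sc vw.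
  by case: vwq => /andP[_ /eqP /= vw_eq] _; rewrite vw_eq eqxx in vw.
exists y.
  by apply: (convex_hull_shortest_dpath vS wS vwq); rewrite !inE eqxx orbT.
by case: vwq => /andP[/andP[]].
Qed.

Lemma hull_arc_bound_pair u y : u != y ->
  1 < #|hull [set u; y]| /\ hull_arc_bound [set u; y].
Proof.
move=> uy; set H := hull [set u; y].
have hull_gt1 : 1 < #|H|.
  apply/card_gt1P; exists u, y.
  by rewrite !(subsetP (subset_convex_hull _)) ?inE ?eqxx ?orbT.
split=> //; rewrite /hull_arc_bound cards2 uy addnC leq_add2r.
exact/leq_card_arcs/(fun v => convex_hull_out_arc hull_gt1).
Qed.

Lemma hull_arc_bound_extend (S : {set T}) :
  1 < #|hull S| -> hull S != [set: T] -> hull_arc_bound S ->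
  exists2 S', #|hull S| < #|hull S'| & hull_arc_bound S'.
Proof.
move=> hull_gt1; rewrite eqEsubset subsetT /= => /subsetPn[v _ vS] bound_S.
have [x xS] := card_gt0P (ltnW hull_gt1).
have xv : x != v by apply: contraNneq vS => <-.
have [p xvp] := sc xv.
have [x' [w [x'S wS x'w]]] := dwalk_exit_arc xS vS xvp.
set H := hull S; set H' := hull (w |: S).
have sHH' : H \subset H' := convex_hullS (subsetUr _ _).
have wH' : w \in H' := subsetP (subset_convex_hull _) _ (setU11 _ _).
have ltHH' : #|H| < #|H'| by apply/proper_card/properP; split=> //; exists w.
exists (w |: S) => //.
have out_new : {in H' :\: H, forall v, exists2 y, y \in H' & a v y}.
  move=> v' /setDP[v'H' _]; apply: convex_hull_out_arc v'H'.
  exact: ltn_trans ltHH'.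
have := card_arcs_grow sHH' x'S wH' wS x'w out_new.
have : #|w |: S| <= #|S|.+1 by rewrite cardsU1 -add1n leq_add2r leq_b1.
move: bound_S ltHH'; rewrite /hull_arc_bound -/H -/H' cardsDS //.
lia.
Qed.

Lemma exists_hull_set_arc_bound (S : {set T}) :
  1 < #|hull S| -> hull_arc_bound S ->
  exists2 S', hull_set a S' & hull_arc_bound S'.
Proof.
have [n] := ubnP (#|T| - #|hull S|); elim: n S => // n IHn S lt_n hull_gt1 bound_S.
have [full | not_full] := eqVneq (hull S) [set: T].
  by exists S; rewrite /hull_set ?full.
have [S' ltHH' bound_S'] := hull_arc_bound_extend hull_gt1 not_full bound_S.
apply: IHn bound_S'; last exact: ltn_trans ltHH'.
have := max_card (hull S'); lia.
Qed.

End StronglyConnected.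
End ConvexHull.

Theorem proposition3 (T : finType) (a : rel T) :
  strongly_oriented a ->
  hull_number a + num_vertices T <= num_arcs a + 2.
Proof.
case=> _ sc; have := hull_number_le (hull_setT a); rewrite /num_vertices cardsT.
have [small | /card_gt1P[u [y [_ _ uy]]]] := leqP #|T| 1; first by lia.
have [hull_gt1 bound_uy] := hull_arc_bound_pair sc uy.
have [S hull_S] := exists_hull_set_arc_bound sc hull_gt1 bound_uy.
rewrite /hull_arc_bound (eqP hull_S) -num_arcsE cardsT => bound_S _.
have := hull_number_le hull_S; lia.
Qed.
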